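(* Let $E$ be a Hausdorff locally convex topological vector space and let $C$ be a set of real-valued functions on $E$, each Gateaux differentiable at $\hat{x}$, with $\hat{x}\in[C]^\times$, such that $\overline{\operatorname{conv}}^{w^*}\{d_G\phi(\hat{x}):\phi\in C\}$ is $w^*$-compact in $E^*$. Then $\mathcal{T}_C(\hat{x})\neq\emptyset$ if and only if $\inf_{\xi\in C}\xi(\hat{x})=0$. In particular, $\mathcal{T}_C(\hat{x})\neq\emptyset$ whenever $\hat{x}\in F\setminus\operatorname{int}(F)$, where $F$ is a nonempty subset of $E$ that is weak-admissible at $\hat{x}$ and determined by $C$.
   Context: $E^*$ carries the weak-star topology; $\overline{\operatorname{conv}}^{w^*}$ is the $w^*$-closed convex hull. Gateaux differentiability of $\phi$ at $x$: there is $d_G\phi(x)\in E^*$ with $\lim_{t\searrow0}(\phi(x+tv)-\phi(x))/t=\langle d_G\phi(x),v\rangle$ for all $v$. $[C]^\times:=\{x\in E:\phi(x)\ge0\ \forall\phi\in C\}$. $\mathcal{T}_C(\hat x):=\bigcap_{n\ge1}\overline{\operatorname{conv}}^{w^*}\{d_G\phi(\hat x):\phi\in C,\ \phi(\hat x)\in[0,1/n]\}$. $C$ is equi-Gateaux differentiable at $x$ if for every $v$, $\lim_{t\searrow0}\sup_{\phi\in C}|(\phi(x+tv)-\phi(x)-t\langle d_G\phi(x),v\rangle)/t|=0$; equi-lower semicontinuous at $x$ if for every $\varepsilon>0$ some open neighbourhood $O$ of $x$ satisfies $\phi(y)-\phi(x)>-\varepsilon$ for all $y\in O,\phi\in C$.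 $F$ is weak-admissible at $\hat x\in F$, determined by a nonempty family $C$, if: (a) $F=[C]^\times$; (b) $C$ is equi-Gateaux differentiable at $\hat x$; (c) $\{\phi\in C:\phi(\hat x)\ne0\}$ is empty or equi-lower semicontinuous at $\hat x$; (d) $\overline{\operatorname{conv}}^{w^*}\{d_G\phi(\hat x):\phi\in C\}$ is $w^*$-compact. *)

From HB Require Import structures.
From mathcomp Require Import all_boot all_order all_algebra.
From mathcomp Require Import all_classical all_reals all_analysis.

Set Implicit Arguments.
Unset Strict Implicit.
Unset Printing Implicit Defensive.

Import Order.TTheory GRing.Theory Num.Theory.
Import numFieldTopology.Exports.

Local Open Scope classical_set_scope.
Local Open Scope ring_scope.

Section Defs.
Variables (R : realType) (E : tvsType R).

(* The weak-star topology on E^star is the topology of pointwise convergence;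
   we view functionals as elements of the pointwise (product) topology on
   E -> R, and E^star as a subset of it. *)
Definition fnl := {ptws E -> R}.

Definition dual : set fnl :=
  [set f : fnl | (forall (a : R) (x y : E), f (a *: x + y) = a * f x + f y)
                 /\ continuous (f : E -> R)].

Definition convex_fnl (B : set fnl) : Prop :=
  forall (f g : fnl) (t : R), B f -> B g -> 0 <= t <= 1 ->
    B ((fun x : E => t * f x + (1 - t) * g x) : fnl).

Definition wstar_closed (B : set fnl) : Prop :=
  B `<=` dual /\ exists K : set fnl, closed K /\ B = K `&` dual.

Definition wstar_clconv (A : set fnl) : set fnl :=
  \bigcap_(B in [set B : set fnl | A `<=` B /\ convex_fnl B /\ wstar_closed B]) B.

(* w*-compact subset of E^star (compactness in the subspace topology of E^star
   coincides with compactness in the ambient pointwise topology) *)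
Definition wstar_compact (K : set fnl) : Prop := K `<=` dual /\ compact K.

Definition gateaux_at (phi : E -> R) (x : E) (d : fnl) : Prop :=
  d \in dual /\
  forall v : E, (fun t : R => (phi (x + t *: v) - phi x) / t) @ 0^'+ --> d v.

Definition nonneg_set (C : set (E -> R)) : set E :=
  [set x | forall phi, C phi -> 0 <= phi x].

(* T_C(xhat), where dG phi stands for d_G phi (xhat) *)
Definition tangent_cone (C : set (E -> R)) (dG : (E -> R) -> fnl) (xh : E)
  : set fnl :=
  \bigcap_(n in [set n : nat | (1 <= n)%N])
     wstar_clconv [set dG phi | phi in
        [set phi | C phi /\ 0 <= phi xh <= n%:R^-1]].

Definition equi_gateaux (C : set (E -> R)) (dG : (E -> R) -> fnl) (x : E) :=
  forall v : E,
    (fun t : R => ereal_sup [set (`| (phi (x + t *: v) - phi x - t * dG phi v) / t |)%:E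
                             | phi in C]) @ 0^'+ --> 0%E.

Definition equi_lsc (C : set (E -> R)) (x : E) :=
  forall eps : R, 0 < eps -> exists O : set E, open O /\ O x /\
    forall y phi, O y -> C phi -> phi y - phi x > - eps.

Definition weak_admissible (F : set E) (C : set (E -> R))
  (dG : (E -> R) -> fnl) (xh : E) : Prop :=
  C !=set0 /\ F xh /\
  F = nonneg_set C /\
  equi_gateaux C dG xh /\
  ([set phi | C phi /\ phi xh != 0] = set0 \/
     equi_lsc [set phi | C phi /\ phi xh != 0] xh) /\
  wstar_compact (wstar_clconv (dG @` C)).
End Defs.

(** For r > 0 let A_r be the set of gradients of the constraints phi in C
    with 0 <= phi(xh) <= r, so that T_C(xh) is the intersection of the
    w*-closed convex hulls of the A_(1/n).  If inf phi(xh) > 0 the A_r are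
    empty for small r, hence so is T_C(xh).  If the infimum is 0, the A_(1/n)
    form a decreasing sequence of nonempty subsets of the w*-compact hull of
    all gradients, so their closures share a point, which lies in every
    w*-closed hull of an A_(1/n).
    In the admissible case, an infimum c > 0 would make every phi nonzero at
    xh, and equi-lower semicontinuity with eps = c would give a neighbourhood
    of xh on which every phi is nonnegative, i.e. xh in int F. *)

From HB Require Import structures.
From mathcomp Require Import all_boot all_order all_algebra.
From mathcomp Require Import all_classical all_reals all_analysis.
From mathcomp Require Import lra.

Set Implicit Arguments.
Unset Strict Implicit.
Unset Printing Implicit Defensive.
Import Order.TTheory GRing.Theory Num.Theory.
Import numFieldTopology.Exports.
Local Open Scope classical_set_scope.
Local Open Scope ring_scope.

Lemma compact_nested_closure (T : topologicalType) (K : set T)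
    (S : nat -> set T) :
  compact K -> (forall n, S n `<=` K) -> (forall n, S n !=set0) ->
  (forall m n, (m <= n)%N -> S n `<=` S m) ->
  exists2 p, K p & forall n, closure (S n) p.
Proof.
move=> cK SK S0 Sdec.
have finIS : finI setT S.
  move=> D _; have [x Smx] := S0 (\max_(i <- finmap.enum_fset D) i).
  exists x => i Di; apply: Sdec Smx.
  exact: (leq_bigmax_seq (F := id) i Di).
have [|p [Kp clp]] := cK _ (finI_filter finIS).
  by exists (S 0%N); [exact: finI_from1 | exact: SK].
exists p => // n B; apply: clp.
by exists (S n) => //; exact: finI_from1.
Qed.

Lemma ereal_inf_img_eq0 (R : realType) (T : Type) (A : set T) (f : T -> R) :
  (forall x, A x -> 0 <= f x) ->
  ereal_inf [set (f x)%:E | x in A] = 0%E <->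
  (forall e, 0 < e -> exists2 x, A x & f x <= e).
Proof.
move=> f_ge0; split=> [inf0 e e0|small].
  have /ereal_inf_lt[_ [x Ax <-]] : (ereal_inf [set (f x)%:E | x in A] < e%:E)%E.
    by rewrite inf0 lte_fin.
  by rewrite lte_fin => /ltW; exists x.
apply/eqP; rewrite eq_le; apply/andP; split.
  apply/lee_addgt0Pr => e e0; rewrite add0e; apply: ge_ereal_inf.
  by have [x Ax le] := small e e0; exists (f x)%:E; [exists x | rewrite lee_fin].
by apply: le_ereal_inf_tmp => _ [x Ax <-]; rewrite lee_fin; exact: f_ge0.
Qed.

Section WstarHull.
Variables (R : realType) (E : tvsType R).
Implicit Types A : set (fnl E).

Lemma wstar_clconv_sub A : A `<=` wstar_clconv A.
Proof. by move=> a Aa B [AB _]; exact: AB. Qed.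

Lemma wstar_clconv_neq0 A : wstar_clconv A !=set0 -> A !=set0.
Proof.
move=> [f Af]; apply/set0P/negP => /eqP A0; suff : (set0 : set (fnl E)) f by [].
apply: Af; split; first by rewrite A0.
split=> //; split=> //.
by exists set0; split; [exact: closed0 | rewrite set0I].
Qed.

Lemma wstar_clconv_closure A :
  @dual R E `&` closure (wstar_clconv A) `<=` wstar_clconv A.
Proof.
move=> g [dg clg] B /[dup] hullB [_ [_ [_ [K [cK BK]]]]].
rewrite BK; split=> //; rewrite (closure_id K).1//.
apply: closureS clg => f /(_ B hullB); rewrite BK; by case.
Qed.

End WstarHull.

Section TangentCone.
Variables (R : realType) (E : tvsType R).
Variables (C : set (E -> R)) (dG : (E -> R) -> fnl E) (xh : E).

Definition eps_active (r : R) : set (E -> R) :=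
  [set phi | C phi /\ 0 <= phi xh <= r].

Definition nearly_active : Prop :=
  forall e, 0 < e -> exists2 phi, C phi & phi xh <= e.

Lemma eps_activeS (r s : R) : r <= s -> eps_active r `<=` eps_active s.
Proof.
by move=> rs phi [Cphi /andP[phi0 phir]]; split; rewrite // phi0 (le_trans phir).
Qed.

Lemma tangent_cone_neq0_nearly_active :
  tangent_cone C dG xh !=set0 -> nearly_active.
Proof.
move=> [g Tg] e e0; pose n := (Num.truncn e^-1).+1.
have ne : wstar_clconv (dG @` eps_active n%:R^-1) !=set0 by exists g; exact: Tg.
have [_ [phi [Cphi /andP[_ phin]] _]] := wstar_clconv_neq0 ne.
exists phi => //; apply/(le_trans phin)/ltW.
by rewrite -[e in _ < e]invrK ltf_pV2 ?posrE ?invr_gt0 ?ltr0Sn ?truncnS_gt.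
Qed.

Lemma nearly_active_tangent_cone_neq0 : nonneg_set C xh ->
  wstar_compact (wstar_clconv (dG @` C)) -> nearly_active ->
  tangent_cone C dG xh !=set0.
Proof.
move=> Cxh [Kdual cK] small.
pose S n := dG @` eps_active n.+1%:R^-1.
have SK n : S n `<=` wstar_clconv (dG @` C).
  by move=> _ [phi [Cphi _] <-]; apply: wstar_clconv_sub; exists phi.
have S0 n : S n !=set0.
  have [phi Cphi phin] : exists2 phi, C phi & phi xh <= n.+1%:R^-1.
    by apply: small; rewrite invr_gt0 ltr0Sn.
  by exists (dG phi), phi => //; split; rewrite // phin Cxh.
have Sdec m n : (m <= n)%N -> S n `<=` S m.
  move=> mn; apply/image_subset/eps_activeS.
  by rewrite lef_pV2 ?posrE ?ltr0Sn ?ler_nat.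
have [p Kp clSp] := compact_nested_closure cK SK S0 Sdec.
exists p => -[//|n] _; apply: wstar_clconv_closure; split; first exact: Kdual.
by apply: closureS (clSp n); exact: wstar_clconv_sub.
Qed.

Lemma not_nearly_active_lbound : ~ nearly_active ->
  exists2 c, 0 < c & forall phi, C phi -> c <= phi xh.
Proof.
move=> /existsNP[c /not_implyP[c0 not_small]]; exists c => // phi Cphi.
by rewrite leNgt; apply/negP => /ltW phic; apply: not_small; exists phi.
Qed.

End TangentCone.

Lemma equi_lsc_interior_nonneg_set (R : realType) (E : tvsType R)
    (C : set (E -> R)) (xh : E) (c : R) :
  0 < c -> equi_lsc C xh -> (forall phi, C phi -> c <= phi xh) ->
  interior (nonneg_set C) xh.
Proof.
move=> c0 lsc cC; have [U [oU [Uxh HU]]] := lsc c c0.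
apply: filterS (open_nbhs_nbhs (conj oU Uxh)) => y Uy phi Cphi.
by have := HU y phi Uy Cphi; have := cC phi Cphi; lra.
Qed.

Theorem proposition3p10 (R : realType) (E : tvsType R)
  (C : set (E -> R)) (dG : (E -> R) -> fnl E) (xh : E) :
  hausdorff_space E ->
  (forall phi, C phi -> gateaux_at phi xh (dG phi)) ->
  (nonneg_set C xh ->
   wstar_compact (wstar_clconv (dG @` C)) ->
   (tangent_cone C dG xh !=set0 <->
     ereal_inf [set (phi xh)%:E | phi in C] = 0%E))
  /\ (forall F : set E, F !=set0 -> weak_admissible F C dG xh ->
        F xh -> ~ interior F xh -> tangent_cone C dG xh !=set0).
Proof.
move=> _ _; split=> [Cxh cK|F _ [C0 [_ [FE [_ [lsc cK]]]]] Fxh notint].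
  rewrite (@ereal_inf_img_eq0 _ _ C (fun phi => phi xh) Cxh); split.
    exact: tangent_cone_neq0_nearly_active.
  exact: nearly_active_tangent_cone_neq0.
have Cxh : nonneg_set C xh by rewrite -FE.
apply: nearly_active_tangent_cone_neq0 => //.
apply: contra_notP notint => /not_nearly_active_lbound[c c0 cC].
have activeC : [set phi | C phi /\ phi xh != 0] = C.
  apply/seteqP; split=> [phi []//|phi Cphi]; split=> //.
  by rewrite gt_eqF // (lt_le_trans c0 (cC _ Cphi)).
rewrite activeC in lsc; case: lsc => [C_0|lsc]; first by case: C0; rewrite C_0.
by rewrite FE; exact: equi_lsc_interior_nonneg_set c0 lsc cC.
Qed.
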